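(* Let $\mathcal{F}$ satisfy the standard conditions, let $A$ be an $\mathcal{F}$-sequence and $\alpha\in\mathbb{R}$. If $x\,|A(x)-\alpha|$ is bounded as $x$ ranges over $\mathbb{N}$, then $\alpha$ is $\mathcal{F}$-computable.
   Context: $\mathbb{N}=\{0,1,2,\dots\}$. $\mathcal{F}$ is a set of functions $\mathbb{N}^n\to\mathbb{N}$; it satisfies the standard conditions if it contains the zero function, the successor, all projections $P^n_i$, addition, multiplication and modified subtraction $x\dot- y=\max(x-y,0)$, and is closed under composition. An $\mathcal{F}$-sequence is $A:\mathbb{N}\to\mathbb{Q}$, $A(x)=\frac{f(x)-g(x)}{h(x)+1}$, with $f,g,h:\mathbb{N}\to\mathbb{N}$ in $\mathcal{F}$. A real number $\alpha$ is $\mathcal{F}$-computable if there is an $\mathcal{F}$-sequence $A$ with $|A(x)-\alpha|\le\frac1{x+1}$ for all $x\in\mathbb{N}$. *)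

From Stdlib Require Import Reals.
From Stdlib Require Fin.
Open Scope R_scope.

Definition fn (n : nat) : Type := (Fin.t n -> nat) -> nat.

Definition fclass : Type := forall n : nat, fn n -> Prop.

Definition arg0 {n} (v : Fin.t (S n) -> nat) : nat := v Fin.F1.
Definition arg1 {n} (v : Fin.t (S (S n)) -> nat) : nat := v (Fin.FS Fin.F1).

Definition standard_conditions (F : fclass) : Prop :=
  F 1%nat (fun _ => 0%nat) /\
  F 1%nat (fun v => S (arg0 v)) /\
  (forall n (i : Fin.t n), F n (fun v => v i)) /\
  F 2%nat (fun v => (arg0 v + arg1 v)%nat) /\
  F 2%nat (fun v => (arg0 v * arg1 v)%nat) /\
  F 2%nat (fun v => (arg0 v - arg1 v)%nat) (* truncated subtraction *) /\
  (forall m n (f : fn m) (gs : Fin.t m -> fn n),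
      F m f -> (forall i, F n (gs i)) ->
      F n (fun v => f (fun i => gs i v))).

Definition un (f : fn 1) (x : nat) : nat := f (fun _ => x).

Definition Fseq (f g h : fn 1) (x : nat) : R :=
  (INR (un f x) - INR (un g x)) / (INR (un h x) + 1).

Definition F_computable (F : fclass) (alpha : R) : Prop :=
  exists f g h : fn 1, F 1%nat f /\ F 1%nat g /\ F 1%nat h /\
    forall x : nat, Rabs (Fseq f g h x - alpha) <= 1 / (INR x + 1).

(** If [x |A(x) - alpha| <= M <= K], the reindexed sequence [A((K+1)(x+1))] is
    within [1/(x+1)] of [alpha]; the reindexing map [x |-> (K+1)(x+1)] lies in
    [F], and precomposing [f], [g], [h] with it keeps them in [F]. *)

From Stdlib Require Import Reals Lra.
Open Scope R_scope.

Definition comp1 (f k : fn 1) : fn 1 := fun v => f (fun _ => k v).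

Definition args2 (a b : fn 1) (i : Fin.t 2) : fn 1 :=
  match i with Fin.F1 => a | Fin.FS _ => b end.

Lemma args2_in (P : fn 1 -> Prop) (a b : fn 1) :
  P a -> P b -> forall i, P (args2 a b i).
Proof. intros Ha Hb i. apply (Fin.caseS' i); [exact Ha | intros; exact Hb]. Qed.

Definition scale (K : nat) : fn 1 := fun v => (K * S (arg0 v))%nat.

Section StandardClosure.

Variable F : fclass.
Hypothesis HF : standard_conditions F.

Lemma F_const (c : nat) : F 1%nat (fun _ => c).
Proof.
  destruct HF as (Hzero & Hsucc & _ & _ & _ & _ & Hcomp).
  induction c as [|c IHc]; [exact Hzero|].
  exact (Hcomp 1%nat 1%nat _ (fun _ _ => c) Hsucc (fun _ => IHc)).
Qed.

Lemma F_comp1 (f k : fn 1) : F 1%nat f -> F 1%nat k -> F 1%nat (comp1 f k).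
Proof.
  destruct HF as (_ & _ & _ & _ & _ & _ & Hcomp).
  intros Hf Hk. exact (Hcomp 1%nat 1%nat f (fun _ => k) Hf (fun _ => Hk)).
Qed.

Lemma F_mul (a b : fn 1) :
  F 1%nat a -> F 1%nat b -> F 1%nat (fun v => (a v * b v)%nat).
Proof.
  destruct HF as (_ & _ & _ & _ & Hmul & _ & Hcomp).
  intros Ha Hb.
  exact (Hcomp 2%nat 1%nat _ (args2 a b) Hmul (args2_in _ a b Ha Hb)).
Qed.

Lemma F_scale (K : nat) : F 1%nat (scale K).
Proof.
  destruct HF as (_ & Hsucc & _ & _ & _ & _ & _).
  exact (F_mul _ _ (F_const K) Hsucc).
Qed.

End StandardClosure.

Lemma Fseq_comp1 (f g h k : fn 1) (x : nat) :
  Fseq (comp1 f k) (comp1 g k) (comp1 h k) x = Fseq f g h (un k x).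
Proof. reflexivity. Qed.

Lemma le_inv_succ_of_scaled_le (K x : nat) (e : R) :
  0 <= e -> INR (S K * S x) * e <= INR K -> e <= 1 / (INR x + 1).
Proof.
  intros He Hscaled.
  rewrite mult_INR, !S_INR in Hscaled.
  pose proof (pos_INR K). pose proof (pos_INR x).
  apply Rmult_le_reg_l with ((INR K + 1) * (INR x + 1)); [nra|].
  replace ((INR K + 1) * (INR x + 1) * (1 / (INR x + 1))) with (INR K + 1)
    by (field; lra).
  lra.
Qed.

Theorem mainTheorem11 (F : fclass) (f g h : fn 1) (alpha : R) :
  standard_conditions F ->
  F 1%nat f -> F 1%nat g -> F 1%nat h ->
  (exists M : R, forall x : nat, INR x * Rabs (Fseq f g h x - alpha) <= M) ->
  F_computable F alpha.
Proof.
  intros HF Hf Hg Hh [M HM].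
  destruct (INR_unbounded M) as [K HK].
  pose (s := scale (S K)).
  exists (comp1 f s), (comp1 g s), (comp1 h s).
  split; [apply F_comp1, F_scale; assumption|].
  split; [apply F_comp1, F_scale; assumption|].
  split; [apply F_comp1, F_scale; assumption|].
  intros x.
  rewrite Fseq_comp1.
  apply le_inv_succ_of_scaled_le with (K := K); [apply Rabs_pos|].
  apply Rle_trans with M; [exact (HM (un s x)) | lra].
Qed.
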